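(* For each $n=1,\ldots,N$ let $\mathbf{A}^{(n)}\in\mathbb{R}^{I_n\times R}$ be a random matrix with rows $\mathbf{a}^{(n)}_{i_n}\in\mathbb{R}^R$ (as column vectors), all entries having finite second moments. Assume the matrices $\mathbf{A}^{(1)},\ldots,\mathbf{A}^{(N)}$ are independent and that, for all $n$ and all $i_n$, the row vectors $\{\mathbf{a}^{(n)}_{i_n}\}$ are independent. Then $$\mathbb{E}\left[ \left\| [\![ \mathbf{A}^{(1)},\ldots, \mathbf{A}^{(N)} ]\!]\right\|_F^2 \right] = \sum_{i_1=1}^{I_1}\cdots\sum_{i_N=1}^{I_N} \left\langle \mathbb{E}\left[\mathbf{a}_{i_1}^{(1)}\mathbf{a}_{i_1}^{(1)T}\right],\ldots,\mathbb{E}\left[\mathbf{a}_{i_N}^{(N)}\mathbf{a}_{i_N}^{(N)T} \right]\right\rangle.$$ Moreover, letting $\mathbf{B}^{(n)}\in\mathbb{R}^{I_n\times R^2}$ be the matrix whose $i_n$th row is $\mathrm{vec}\left(\mathbb{E}\left[\mathbf{a}_{i_n}^{(n)}\mathbf{a}_{i_n}^{(n)T}\right]\right)^T$, we have $$\mathbb{E}\left[ \left\| [\![ \mathbf{A}^{(1)},\ldots, \mathbf{A}^{(N)} ]\!]\right\|_F^2 \right]=\mathbf{1}_{\prod_n I_n}^T \left(\bigodot_n \mathbf{B}^{(n)} \right)\mathbf{1}_{R^2},$$ where $\mathbf{1}_m$ denotes the all-ones vector of length $m$.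
   Context: The Kruskal operator $[\![ \mathbf{A}^{(1)},\ldots, \mathbf{A}^{(N)} ]\!]$ denotes the tensor $\sum_{r=1}^R \mathbf{a}^{(1)}_{\cdot r}\circ\cdots\circ\mathbf{a}^{(N)}_{\cdot r}\in\mathbb{R}^{I_1\times\cdots\times I_N}$, where $\mathbf{a}^{(n)}_{\cdot r}$ is the $r$th column of $\mathbf{A}^{(n)}$ and $\circ$ is the outer product; its $(i_1,\ldots,i_N)$ entry is $\sum_r\prod_n a^{(n)}_{i_n r}$. $\|\cdot\|_F$ is the Frobenius norm (square root of the sum of squares of all entries). The generalized inner product of $N$ matrices of the same size is $\langle\mathbf{M}^{(1)},\ldots,\mathbf{M}^{(N)}\rangle=\sum_{i,j}\prod_n M^{(n)}_{ij}$. $\mathrm{vec}$ stacks the columns of a matrix into a vector. For matrices with the same number of columns, $\mathbf{A}\odot\mathbf{B}$ is the Khatri–Rao (columnwise Kronecker) product and $\bigodot_n \mathbf{B}^{(n)} = \mathbf{B}^{(N)}\odot\cdots\odot\mathbf{B}^{(1)}$, of size $\prod_n I_n\times R^2$. *)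

From HB Require Import structures.
From mathcomp Require Import all_boot all_order all_algebra.
From mathcomp Require Import all_classical all_reals.
From mathcomp Require Import topology normedtype sequences measure lebesgue_measure lebesgue_integral probability.
Set Implicit Arguments. Unset Strict Implicit. Unset Printing Implicit Defensive.
Import Order.TTheory GRing.Theory Num.Theory.
Local Open Scope classical_set_scope.
Local Open Scope ring_scope.

Section Defs.
Context {R : realType}.

Definition kruskal (N Rk : nat) (I : 'I_N -> nat)
  (A : forall n : 'I_N, 'M[R]_(I n, Rk))
  (idx : {dffun forall n : 'I_N, 'I_(I n)}) : R :=
  \sum_(r < Rk) \prod_(n < N) A n (idx n) r.

Definition frob_norm (N : nat) (I : 'I_N -> nat)
  (X : {dffun forall n : 'I_N, 'I_(I n)} -> R) : R :=
  Num.sqrt (\sum_(idx : {dffun forall n : 'I_N, 'I_(I n)}) X idx ^+ 2).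

Definition ginner (N p q : nat) (M : 'I_N -> 'M[R]_(p, q)) : R :=
  \sum_(i < p) \sum_(j < q) \prod_(n < N) M n i j.

(* vec: column stacking; entry (r,s) goes to (0-based) position r + s*m *)
Definition vecmx (m q : nat) (M : 'M[R]_(m, q)) : 'cV[R]_(m * q) :=
  \col_(k < m * q) \sum_(r < m) \sum_(s < q) (k == (r + s * m)%N :> nat)%:R * M r s.

(* Khatri-Rao product A (.) B : column c is the Kronecker product a_c (x) b_c,
   whose (0-based) entry i*p + j is A i c * B j c *)
Definition khatri_rao (m p C : nat) (A : 'M[R]_(m, C)) (B : 'M[R]_(p, C))
  : 'M[R]_(m * p, C) :=
  \matrix_(k < m * p, c < C)
    \sum_(i < m) \sum_(j < p) (k == (i * p + j)%N :> nat)%:R * (A i c * B j c).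

(* iterated Khatri-Rao product B_(k-1) (.) ... (.) B_0 (.) 1, for families over nat *)
Fixpoint kr_dim (k : nat) (J : nat -> nat) : nat :=
  match k with 0 => 1%N | k'.+1 => (J k' * kr_dim k' J)%N end.

Fixpoint kr_big (C : nat) (J : nat -> nat) (B : forall k, 'M[R]_(J k, C)) (k : nat)
  : 'M[R]_(kr_dim k J, C) :=
  match k with
  | 0 => const_mx 1
  | k'.+1 => khatri_rao (B k') (kr_big B k')
  end.

(* extension of a family indexed by 'I_N to nat (dummy empty matrices beyond N) *)
Definition ext_dim (N : nat) (I : 'I_N -> nat) (k : nat) : nat :=
  match (insub k : option 'I_N) with Some n => I n | None => 0%N end.

Definition ext_mx (N C : nat) (I : 'I_N -> nat) (B : forall n : 'I_N, 'M[R]_(I n, C))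
  (k : nat) : 'M[R]_(ext_dim I k, C) :=
  match (insub k : option 'I_N) as o
    return 'M[R]_(match o with Some n => I n | None => 0%N end, C) with
  | Some n => B n
  | None => 0
  end.

(* \bigodot_n B^(n) = B^(N) (.) ... (.) B^(1), of size (prod_n I_n) x C *)
Definition khatri_rao_big (N C : nat) (I : 'I_N -> nat)
  (B : forall n : 'I_N, 'M[R]_(I n, C)) : 'M[R]_(kr_dim N (ext_dim I), C) :=
  kr_big (ext_mx B) N.

End Defs.

Section Prob.
Context {d : measure_display} {T : measurableType d} {R : realType}.

Definition gen_sigma (J : Type) (f : J -> T -> R) : set (set T) :=
  <<s [set E | exists j, exists2 B : set R, measurable B & E = f j @^-1` B] >>.

Definition mutually_independent (P : probability T R) (K : finType)
  (F : K -> set (set T)) : Prop :=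
  forall (J : {set K}) (E : K -> set T),
    (forall j, j \in J -> F j (E j)) ->
    P (\bigcap_(j in [set` J]) E j) = (\prod_(j in J) P (E j))%E.

Definition expect (P : probability T R) (X : T -> R) : R := Rintegral P setT X.

End Prob.

From HB Require Import structures.
From mathcomp Require Import all_boot all_order all_algebra.
From mathcomp Require Import all_classical all_reals ereal.
From mathcomp Require Import topology normedtype sequences measure numfun.
From mathcomp Require Import measurable_realfun lebesgue_measure lebesgue_integral.
From mathcomp Require Import probability lra zify.
Set Implicit Arguments. Unset Strict Implicit. Unset Printing Implicit Defensive.
Import Order.TTheory GRing.Theory Num.Theory numFieldNormedType.Exports.
Local Open Scope classical_set_scope.
Local Open Scope ring_scope.

(* Expanding the square, the squared Frobenius norm of the Kruskal tensor is
   the sum over indices [idx] and pairs [(r, s)] of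
   [\prod_n a^(n)_(i_n r) * a^(n)_(i_n s)], whose n-th factor depends on
   A^(n) only.  Independence of the A^(n) turns the expectation of this
   product into [\prod_n E[a a^T]_(r s)]; summing over [(r, s)] gives the
   generalized inner product.  The product rule for independent integrable
   variables is obtained as usual: for simple functions it is the product
   rule defining independence, it extends to nonnegative variables by monotone
   convergence of dyadic approximations, and to signed ones through positive
   and negative parts.  The Khatri-Rao form holds because the column sums of
   an iterated Khatri-Rao product are the products of the column sums, and
   [vec] only reindexes the pairs [(r, s)]. *)

Lemma bigA_distr_dffun (R : comPzSemiRingType) (I : finType) (J : I -> finType)
    (G : forall i, J i -> R) :
  \prod_i \sum_(j : J i) G i j = \sum_(f : {dffun forall i, J i}) \prod_i G i (f i).
Proof.
pose G' i := [ffun j => G i j].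
have G'E i : G i = G' i :> (J i -> R) by apply/funext => j; rewrite ffunE.
rewrite (eq_bigr (fun i => \sum_(p in tagged_with J i) untag 0 (G' i) p)); last first.
  by move=> i _; rewrite -G'E -big_tag.
rewrite bigA_distr_big_dep -big_fprod.
rewrite (reindex (@fprod_of_dffun I J)); last exact/onW_bij/fprod_of_dffun_bij.
apply: eq_bigr => f _; rewrite big_mkcond /=; apply: eq_bigr => i _.
by rewrite /fprod_of_dffun fprodE G'E.
Qed.

Section kruskal_sums.
Variable R : realType.

Lemma sumr_ord_delta (n a : nat) (x : R) : (a < n)%N ->
  \sum_(k < n) (k == a :> nat)%:R * x = x.
Proof.
move=> an; rewrite (bigD1 (Ordinal an)) //= eqxx mul1r big1 ?addr0 // => k.
by rewrite -(inj_eq val_inj) /= => /negbTE ->; rewrite mul0r.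
Qed.

Lemma vec_index_delta (p : nat) (c : 'I_(p * p)) :
  exists r0 s0, forall x : 'I_p -> 'I_p -> R,
    \sum_(r < p) \sum_(s < p) (c == (r + s * p)%N :> nat)%:R * x r s = x r0 s0.
Proof.
have p0 : (0 < p)%N by case: p c => [[]|].
have r0p : (c %% p < p)%N by rewrite ltn_mod.
have s0p : (c %/ p < p)%N by rewrite ltn_divLR // ltn_ord.
exists (Ordinal r0p), (Ordinal s0p) => x.
rewrite (bigD1 (Ordinal r0p)) //= (bigD1 (Ordinal s0p)) //= addnC -divn_eq eqxx mul1r.
rewrite big1 ?addr0; last first.
  move=> s /negbTE ns; case: eqP; rewrite ?mul0r // => h; exfalso.
  move: ns; rewrite -(inj_eq val_inj) /= => /negbT/eqP; apply.
  by rewrite {1}h addnC divnMDl // divn_small ?addn0 // ltn_mod.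
rewrite big1 ?addr0 // => r /negbTE nr; rewrite big1 // => s _.
case: eqP; rewrite ?mul0r // => h; exfalso.
move: nr; rewrite -(inj_eq val_inj) /= => /negbT/eqP; apply.
by rewrite {1}h addnC modnMDl modn_small.
Qed.

Lemma sum_prod_vecmx (N p : nat) (M : 'I_N -> 'M[R]_(p, p)) :
  \sum_(c < p * p) \prod_n vecmx (M n) c ord0 =
  \sum_(r < p) \sum_(s < p) \prod_n M n r s.
Proof.
transitivity (\sum_(c < p * p) \sum_(r < p) \sum_(s < p)
   (c == (r + s * p)%N :> nat)%:R * \prod_n M n r s).
  apply: eq_bigr => c _; have [r0 [s0 c_rs]] := vec_index_delta c.
  by rewrite c_rs; apply: eq_bigr => n _; rewrite mxE; exact: c_rs.
rewrite exchange_big /=; apply: eq_bigr => r _.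
rewrite exchange_big /=; apply: eq_bigr => s _.
by rewrite sumr_ord_delta //; move: (ltn_ord r) (ltn_ord s); nia.
Qed.

Lemma sum_col_kr_big (C : nat) (J : nat -> nat) (B : forall k, 'M[R]_(J k, C))
    (K : nat) (c : 'I_C) :
  \sum_(k < kr_dim K J) kr_big B K k c = \prod_(j < K) \sum_(i < J j) B j i c.
Proof.
elim: K => [|K IH] /=; first by rewrite big_ord0 big_ord1 mxE.
rewrite big_ord_recr /= -IH mulrC.
under eq_bigr do rewrite mxE.
rewrite exchange_big /=; under eq_bigr do rewrite exchange_big /=.
rewrite mulr_suml; apply: eq_bigr => i _; rewrite mulr_sumr; apply: eq_bigr => j _.
by rewrite sumr_ord_delta //; move: (ltn_ord i) (ltn_ord j); nia.
Qed.

Lemma ones_khatri_rao_big_ones (N C : nat) (I : 'I_N -> nat)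
    (B : forall n : 'I_N, 'M[R]_(I n, C)) :
  ((const_mx 1 : 'rV[R]_(kr_dim N (ext_dim I))) *m khatri_rao_big B
     *m (const_mx 1 : 'cV[R]_C)) ord0 ord0
  = \sum_(c < C) \sum_(idx : {dffun forall n : 'I_N, 'I_(I n)}) \prod_n B n (idx n) c.
Proof.
rewrite mxE; apply: eq_bigr => c _; rewrite !mxE mulr1.
under eq_bigr do rewrite mxE mul1r.
rewrite sum_col_kr_big -(bigA_distr_dffun (fun n i => B n i c)).
by apply: eq_bigr => n _; rewrite /ext_dim /ext_mx valK.
Qed.

Lemma sqr_frob_norm_kruskal (N Rk : nat) (I : 'I_N -> nat)
    (A : forall n : 'I_N, 'M[R]_(I n, Rk)) :
  frob_norm (kruskal A) ^+ 2 =
  \sum_(idx : {dffun forall n : 'I_N, 'I_(I n)}) \sum_(r < Rk) \sum_(s < Rk)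
    \prod_n (A n (idx n) r * A n (idx n) s).
Proof.
rewrite /frob_norm sqr_sqrtr; last by apply: sumr_ge0 => *; exact: sqr_ge0.
apply: eq_bigr => idx _; rewrite /kruskal expr2 mulr_suml; apply: eq_bigr => r _.
by rewrite mulr_sumr; apply: eq_bigr => s _; rewrite big_split.
Qed.

End kruskal_sums.

Lemma prodrBE (R : comPzRingType) (I : finType) (u v : I -> R) :
  \prod_i (u i - v i) = \sum_(g : {ffun I -> bool})
    \prod_i (if g i then 1 else -1) * \prod_i (if g i then u i else v i).
Proof.
rewrite (eq_bigr (fun i => \sum_(b : bool) (if b then u i else - v i))); last first.
  by move=> i _; rewrite big_bool.
rewrite bigA_distr_bigA; apply: eq_bigr => g _; rewrite -big_split /=.
by apply: eq_bigr => i _; case: (g i); rewrite ?mul1r ?mulN1r.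
Qed.

Lemma prod_funrposneg (T : Type) (R : realDomainType) (I : finType)
    (X : I -> T -> R) t :
  \prod_i X i t = \sum_(g : {ffun I -> bool})
    \prod_i (if g i then 1 else -1) *
    \prod_i (if g i then (X i)^\+ else (X i)^\-) t.
Proof.
have XE i : X i t = (X i)^\+ t - (X i)^\- t.
  exact/esym/(congr1 (fun f => f t) (funrposBneg (X i))).
under eq_bigr do rewrite XE.
rewrite prodrBE; apply: eq_bigr => g _; congr (_ * _).
by apply: eq_bigr => i _; case: (g i).
Qed.

Lemma cvg_prodr (R : numFieldType) (I : Type) (s : seq I) (u : I -> nat -> R)
    (l : I -> R) :
  (forall i, u i @ \oo --> l i) ->
  (fun m => \prod_(i <- s) u i m) @ \oo --> \prod_(i <- s) l i.
Proof.
move=> u_l; elim: s => [|i s IH].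
  by rewrite big_nil; under eq_fun do rewrite big_nil; exact: cvg_cst.
by rewrite big_cons; under eq_fun do rewrite big_cons; exact: cvgM.
Qed.

Section integral_lemmas.
Context {d : measure_display} {T : measurableType d} {R : realType}.
Variable mu : measure T R.

Lemma prod_indic (I : finType) (E : I -> set T) t :
  \prod_i \1_(E i) t = \1_(\bigcap_(i in [set` [set: I]%SET]) E i) t :> R.
Proof.
have [allE|] := pselect (forall i, E i t).
  rewrite big1 => [|i _]; last by rewrite indicE mem_set.
  by rewrite indicE mem_set // => i _; exact: allE.
move=> /existsNP [i Eit]; rewrite (bigD1 i) //= indicE memNset // mul0r.
by rewrite indicE memNset // => allE; apply/Eit/allE; rewrite /= inE.
Qed.

Lemma preimage_comp_measurable (G : set (set T)) (X : T -> R) (h : R -> R) :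
  (forall B, measurable B -> G (X @^-1` B)) -> measurable_fun setT h ->
  forall B, measurable B -> G ((h \o X) @^-1` B).
Proof.
move=> GX mh B mB; rewrite comp_preimage -[h @^-1` B]setTI.
by apply: GX; exact: mh.
Qed.

Lemma integrable_sqrM (X Y : T -> R) :
  measurable_fun setT X -> measurable_fun setT Y ->
  mu.-integrable setT (fun t => (X t ^+ 2)%:E) ->
  mu.-integrable setT (fun t => (Y t ^+ 2)%:E) ->
  mu.-integrable setT (EFin \o (X \* Y)).
Proof.
move=> mX mY iX iY.
apply: le_integrable (integrableD measurableT iX iY) => //.
  by apply/measurable_EFinP; exact: measurable_funM.
move=> t _; rewrite -EFinD !abse_EFin lee_fin /=.
rewrite [X in _ <= X]ger0_norm ?addr_ge0 ?sqr_ge0 // ler_norml.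
by apply/andP; split; nra.
Qed.

Lemma monotone_convergenceR (g : (T -> R)^nat) (h : T -> R) :
  (forall m, measurable_fun setT (g m)) -> (forall m t, 0 <= g m t) ->
  (forall t, nondecreasing_seq (g ^~ t)) -> (forall t, g ^~ t @ \oo --> h t) ->
  (fun m => \int[mu]_t (g m t)%:E)%E @ \oo --> (\int[mu]_t (h t)%:E)%E.
Proof.
move=> mg g0 nd_g g_h.
have := @cvg_monotone_convergence _ _ _ mu _ measurableT (fun m t => (g m t)%:E).
have -> : (fun t => limn (fun m => (g m t)%:E)) = (fun t => (h t)%:E).
  by apply/funext => t; apply: cvg_lim => //; apply: cvg_EFin; [exact: nearW|exact: g_h].
apply => [m|m t _|t _ m m' mm']; first exact/measurable_EFinP.
  by rewrite lee_fin.
by rewrite lee_fin; exact: nd_g.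
Qed.

End integral_lemmas.

Section approx_indicator_sum.
Context {d : measure_display} {T : measurableType d} {R : realType}.

(* [approx setT f m] is a combination of [(m * 2 ^ m).+1] indicators: one per
   dyadic level below [m], and the last one for the set where [f >= m]. *)
Definition approx_coef (m k : nat) : R :=
  if (k < m * 2 ^ m)%N then k%:R * 2 ^- m else m%:R.

Definition approx_set (f : T -> \bar R) (m k : nat) : set T :=
  if (k < m * 2 ^ m)%N then dyadic_approx setT f m k else integer_approx setT f m.

Lemma approx_coef_ge0 m k : 0 <= approx_coef m k.
Proof.
by rewrite /approx_coef; case: ifP => _; rewrite ?mulr_ge0 ?invr_ge0 ?exprn_ge0.
Qed.

Lemma approx_sum_indic (f : T -> \bar R) m t :
  approx setT f m t =
  \sum_(k < (m * 2 ^ m).+1) approx_coef m k * \1_(approx_set f m k) t.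
Proof.
rewrite big_ord_recr /= /approx_coef /approx_set ltnn; congr (_ + _).
by apply: eq_bigr => k _; rewrite /= ltn_ord.
Qed.

Lemma approx_set_preimage (g : T -> R) m k :
  exists2 S, measurable S & approx_set (EFin \o g) m k = g @^-1` S.
Proof.
rewrite /approx_set; case: ifP => km.
  rewrite /dyadic_approx km.
  exists [set` dyadic_itv R m k]; first exact: measurable_itv.
  apply/seteqP; split => t /=.
    by case=> _ /set_mem [r rI [<-]].
  by move=> gI; split => //; apply/mem_set; exists (g t).
exists `[m%:R, +oo[%classic; first exact: measurable_itv.
by apply/seteqP; split => t; rewrite /integer_approx /= in_itv /= andbT lee_fin;
  [case|].
Qed.

Lemma approx_ge0 (f : T -> \bar R) m t : 0 <= approx setT f m t.
Proof.
by rewrite approx_sum_indic; apply: sumr_ge0 => k _; rewrite mulr_ge0 ?approx_coef_ge0.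
Qed.

Lemma measurable_approx (g : T -> R) m : measurable_fun setT g ->
  measurable_fun setT (approx setT (EFin \o g) m).
Proof.
move=> mg; rewrite (funext (approx_sum_indic _ m)); apply: measurable_sum => k.
apply: measurable_funM => //; apply: measurable_indic.
have [S mS ->] := approx_set_preimage g m k.
by rewrite -[_ @^-1` S]setTI; exact: mg.
Qed.

Lemma cvg_approxR (g : T -> R) t : (forall t, 0 <= g t) ->
  approx setT (EFin \o g) ^~ t @ \oo --> g t.
Proof.
by move=> g0; apply: cvg_approx => //= [u _|]; [rewrite lee_fin | exact: ltry].
Qed.

End approx_indicator_sum.

Section independent_product.
Context {d : measure_display} {T : measurableType d} {R : realType}.
Variable P : probability T R.

Lemma integral_sum_indic (K : finType) (c : K -> R) (E : K -> set T) :
  (forall k, 0 <= c k) -> (forall k, measurable (E k)) ->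
  (\int[P]_t (\sum_k c k * \1_(E k) t)%:E = (\sum_k c k * fine (P (E k)))%:E)%E.
Proof.
move=> c0 mE; under eq_integral do rewrite -sumEFin.
rewrite ge0_integral_sum //; last 2 first.
- by move=> k; apply/measurable_EFinP/measurable_funM => //; exact: measurable_indic.
- by move=> k t _; rewrite lee_fin mulr_ge0.
rewrite -sumEFin; apply: eq_bigr => k _; under eq_integral do rewrite EFinM.
rewrite ge0_integralZl //; first last.
- by rewrite lee_fin.
- by apply/measurable_EFinP; exact: measurable_indic.
by rewrite integral_indic // setIT EFinM fineK // fin_num_measure.
Qed.

Variables (N : nat) (F : 'I_N -> set (set T)).
Hypothesis F_measurable : forall n A, F n A -> measurable A.
Hypothesis F_indep : mutually_independent P F.

Lemma indep_bigcap (E : 'I_N -> set T) : (forall n, F n (E n)) ->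
  fine (P (\bigcap_(n in [set` [set: 'I_N]%SET]) E n)) = \prod_n fine (P (E n)).
Proof.
move=> FE; rewrite F_indep => [|n _]; last exact: FE.
rewrite (eq_bigr (fun n => (fine (P (E n)))%:E)); last first.
  by move=> n _; rewrite fineK // fin_num_measure //; exact: F_measurable.
by rewrite prodEFin /=; apply: eq_bigl => n; rewrite inE.
Qed.

Lemma integral_prod_simple (K : finType) (c : 'I_N -> K -> R)
    (E : 'I_N -> K -> set T) :
  (forall n k, 0 <= c n k) -> (forall n k, F n (E n k)) ->
  (\int[P]_t (\prod_n \sum_k c n k * \1_(E n k) t)%:E =
   (\prod_n \sum_k c n k * fine (P (E n k)))%:E)%E.
Proof.
move=> c0 FE.
pose Eg (g : {ffun 'I_N -> K}) := \bigcap_(n in [set` [set: 'I_N]%SET]) E n (g n).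
have -> : (fun t => (\prod_n \sum_k c n k * \1_(E n k) t)%:E) =
    (fun t => (\sum_(g : {ffun _ -> K}) (\prod_n c n (g n)) * \1_(Eg g) t)%:E).
  apply/funext => t; rewrite bigA_distr_bigA; congr _%:E.
  by apply: eq_bigr => g _; rewrite big_split /= prod_indic.
rewrite integral_sum_indic => [|g|g]; last 2 first.
- exact: prodr_ge0.
- apply: fin_bigcap_measurable => [|n _]; first exact: finite_finset.
  exact: F_measurable.
rewrite bigA_distr_bigA; congr _%:E; apply: eq_bigr => g _.
by rewrite indep_bigcap // big_split.
Qed.

Lemma integral_prod_ge0 (X : 'I_N -> T -> R) :
  (forall n B, measurable B -> F n (X n @^-1` B)) -> (forall n t, 0 <= X n t) ->
  (forall n, P.-integrable setT (EFin \o X n)) ->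
  (\int[P]_t (\prod_n X n t)%:E = (\prod_n expect P (X n))%:E)%E.
Proof.
move=> FX X0 iX.
have mX n : measurable_fun setT (X n).
  by apply/measurable_EFinP; exact: measurable_int (iX n).
pose a n m := approx setT (EFin \o X n) m.
pose Ea n m k := approx_set (EFin \o X n) m k.
pose s n m := \sum_(k < (m * 2 ^ m).+1) approx_coef m k * fine (P (Ea n m k)).
have FEa n m k : F n (Ea n m k).
  by rewrite /Ea; have [S mS ->] := approx_set_preimage (X n) m k; exact: FX.
have int_a n m : (\int[P]_t (a n m t)%:E = (s n m)%:E)%E.
  under eq_integral do rewrite /a approx_sum_indic.
  by apply: integral_sum_indic => k; [exact: approx_coef_ge0 | exact/F_measurable/FEa].
have s_X n : s n @ \oo --> expect P (X n).
  have /fine_cvg // : (fun m => (s n m)%:E) @ \oo --> (expect P (X n))%:E.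
  rewrite -(funext (int_a n)) /expect /Rintegral fineK; last first.
    exact: integrable_fin_num (iX n).
  apply: monotone_convergenceR => [m|m t|t m m' mm'|t].
  - exact: measurable_approx.
  - exact: approx_ge0.
  - exact/lefP/nd_approx.
  - exact: cvg_approxR.
have int_prod_a m :
    (\int[P]_t (\prod_n a n m t)%:E = (\prod_n s n m)%:E)%E.
  under eq_integral do under eq_bigr do rewrite /a approx_sum_indic.
  by apply: integral_prod_simple => n k; [exact: approx_coef_ge0 | exact: FEa].
have prod_s : (fun m => (\prod_n s n m)%:E) @ \oo --> (\prod_n expect P (X n))%:E.
  by apply: cvg_EFin; [exact: nearW | exact: cvg_prodr].
have prod_a : (fun m => (\prod_n s n m)%:E) @ \oo --> (\int[P]_t (\prod_n X n t)%:E)%E.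
  rewrite -(funext int_prod_a).
  apply: monotone_convergenceR => [m|m t|t m m' mm'|t].
  - by apply: measurable_prod => n _; exact: measurable_approx.
  - by apply: prodr_ge0 => n _; exact: approx_ge0.
  - by apply: ler_prod => n _; rewrite approx_ge0; exact/lefP/nd_approx.
  - by apply: cvg_prodr => n; exact: cvg_approxR.
exact: cvg_unique prod_a prod_s.
Qed.

Lemma integrable_prod_ge0 (X : 'I_N -> T -> R) :
  (forall n B, measurable B -> F n (X n @^-1` B)) -> (forall n t, 0 <= X n t) ->
  (forall n, P.-integrable setT (EFin \o X n)) ->
  P.-integrable setT (fun t => (\prod_n X n t)%:E).
Proof.
move=> FX X0 iX; apply/integrableP; split.
  apply/measurable_EFinP/measurable_prod => n _.
  by apply/measurable_EFinP; exact: measurable_int (iX n).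
under eq_integral do rewrite abse_EFin ger0_norm ?prodr_ge0 //.
by rewrite integral_prod_ge0 // ltry.
Qed.

Lemma integral_prod (X : 'I_N -> T -> R) :
  (forall n B, measurable B -> F n (X n @^-1` B)) ->
  (forall n, P.-integrable setT (EFin \o X n)) ->
  P.-integrable setT (fun t => (\prod_n X n t)%:E) /\
  (\int[P]_t (\prod_n X n t)%:E = (\prod_n expect P (X n))%:E)%E.
Proof.
move=> FX iX.
pose Y (b : bool) n : T -> R := if b then (X n)^\+ else (X n)^\-.
have Y0 b n t : 0 <= Y b n t by case: b; rewrite /Y ?funrpos_ge0 ?funrneg_ge0.
have FY b n : forall B, measurable B -> F n (Y b n @^-1` B).
  case: b.
    exact: (preimage_comp_measurable (h := (@id R)^\+) (FX n) (measurable_funrpos _)).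
  exact: (preimage_comp_measurable (h := (@id R)^\-) (FX n) (measurable_funrneg _)).
have iY b n : P.-integrable setT (EFin \o Y b n).
  by case: b; [exact: integrable_funrpos | exact: integrable_funrneg].
have iprodY (g : {ffun 'I_N -> bool}) :=
  integrable_prod_ge0 (X := fun n => Y (g n) n) (fun n => FY (g n) n)
    (fun n => Y0 (g n) n) (fun n => iY (g n) n).
have intY (g : {ffun 'I_N -> bool}) :=
  integral_prod_ge0 (X := fun n => Y (g n) n) (fun n => FY (g n) n)
    (fun n => Y0 (g n) n) (fun n => iY (g n) n).
pose sgn (g : {ffun 'I_N -> bool}) : R := \prod_n (if g n then 1 else -1).
have prodXE t : (\prod_n X n t)%:E =
    (\sum_g (sgn g)%:E * (\prod_n Y (g n) n t)%:E)%E.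
  by rewrite prod_funrposneg -sumEFin; under eq_bigr do rewrite EFinM.
split.
  under eq_fun do rewrite prodXE.
  by apply: (integrable_sum measurableT) => g _; exact: integrableZl.
under eq_integral do rewrite prodXE.
rewrite (integral_sum measurableT) => [|g]; last exact: integrableZl.
rewrite (eq_bigr (fun g => (sgn g * \prod_n expect P (Y (g n) n))%:E)); last first.
  move=> g _; have /= -> := integralZl measurableT (iprodY g) (sgn g).
  by rewrite intY EFinM.
have expectX n : expect P (X n) = expect P (Y true n) - expect P (Y false n).
  rewrite -(RintegralB measurableT (iY _ _) (iY _ _)) /expect.
  by rewrite -[in LHS](funrposBneg (X n)).
rewrite sumEFin (eq_bigr _ (fun n _ => expectX n)) prodrBE.
congr _%:E; apply: eq_bigr => g _; congr (_ * _).
by apply: eq_bigr => n _; case: (g n).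
Qed.

End independent_product.

Section generated_sigma.
Context {d : measure_display} {T : measurableType d} {R : realType}.
Variables (J : Type) (f : J -> T -> R).

Lemma gen_sigma_measurable : (forall j, measurable_fun setT (f j)) ->
  forall E, gen_sigma f E -> measurable E.
Proof.
move=> mf; apply: smallest_sub; first exact: sigma_algebra_measurable.
by move=> _ [j [B mB ->]]; rewrite -[_ @^-1` B]setTI; exact: mf.
Qed.

Lemma gen_sigma_preimageM (j k : J) (B : set R) : measurable B ->
  gen_sigma f ((fun t => f j t * f k t) @^-1` B).
Proof.
pose G := [set E | exists j, exists2 B : set R, measurable B & E = f j @^-1` B].
have mf j' : measurable_fun setT (f j' : g_sigma_algebraType G -> R).
  by move=> _ B' mB'; rewrite setTI; apply: sub_gen_smallest; exists j', B'.
by move=> mB; rewrite -[_ @^-1` B]setTI; exact: measurable_funM (mf j) (mf k) _ _ mB.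
Qed.

End generated_sigma.

Theorem theorem3 (d : measure_display) (T : measurableType d) (R : realType)
  (P : probability T R) (N Rk : nat) (I : 'I_N -> nat)
  (A : forall n : 'I_N, T -> 'M[R]_(I n, Rk)) :
  (forall n i r, measurable_fun setT (fun t => A n t i r)) ->
  (forall n i r, P.-integrable setT (fun t => ((A n t i r) ^+ 2)%:E)) ->
  mutually_independent P
    (fun n : 'I_N => gen_sigma (fun (p : 'I_(I n) * 'I_Rk) t => A n t p.1 p.2)) ->
  (forall n : 'I_N, mutually_independent P
     (fun i : 'I_(I n) => gen_sigma (fun (r : 'I_Rk) t => A n t i r))) ->
  let EAA := fun (n : 'I_N) (i : 'I_(I n)) =>
    \matrix_(r < Rk, s < Rk) expect P (fun t => A n t i r * A n t i s) in
  let B := fun n : 'I_N =>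
    \matrix_(i < I n, k < Rk * Rk) vecmx (EAA n i) k ord0 in
  let lhs := (\int[P]_t ((frob_norm (kruskal (fun n => A n t))) ^+ 2)%:E)%E in
  lhs = (\sum_(idx : {dffun forall n : 'I_N, 'I_(I n)})
           ginner (fun n : 'I_N => EAA n (idx n)))%:E /\
  lhs = (((const_mx 1 : 'rV[R]_(kr_dim N (ext_dim I))) *m khatri_rao_big B
           *m (const_mx 1 : 'cV[R]_(Rk * Rk))) ord0 ord0)%:E.
Proof.
move=> mA sqrA indepA _ EAA B lhs.
have F_measurable n := gen_sigma_measurable (fun p : 'I_(I n) * 'I_Rk => mA n p.1 p.2).
have prodE idx (r s : 'I_Rk) := integral_prod F_measurable indepA
  (X := fun n t => A n t (idx n) r * A n t (idx n) s)
  (fun n => gen_sigma_preimageM (idx n, r) (idx n, s))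
  (fun n => integrable_sqrM (mA _ _ _) (mA _ _ _) (sqrA _ _ _) (sqrA _ _ _)).
have lhsE : lhs = (\sum_(idx : {dffun forall n : 'I_N, 'I_(I n)})
    \sum_(r < Rk) \sum_(s < Rk) \prod_n EAA n (idx n) r s)%:E.
  rewrite /lhs; under eq_integral do rewrite sqr_frob_norm_kruskal !pair_big -sumEFin.
  rewrite (integral_sum measurableT) => [|[[idx r] s]]; last exact: (prodE _ _ _).1.
  rewrite !pair_big -sumEFin; apply: eq_bigr => -[[idx r] s] _.
  rewrite (prodE _ _ _).2; congr _%:E.
  by apply: eq_bigr => n _; rewrite mxE.
split; first by rewrite lhsE.
rewrite lhsE ones_khatri_rao_big_ones; congr _%:E; rewrite [RHS]exchange_big.
apply: eq_bigr => idx _; rewrite -sum_prod_vecmx.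
by apply: eq_bigr => c _; apply: eq_bigr => n _; rewrite /B mxE.
Qed.
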